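(* Let $(G,b,x,2)$ be an instance of Collapsed $k$-Core with $k=2$ such that $G$ is its own $2$-core (every vertex of $G$ has degree at least $2$) and no connected component of $G$ is a cycle. If there is a set $B\subseteq V(G)$ with $|B|\le b$ such that the $2$-core of $G-B$ has at most $x$ vertices, then there is also a set $B'\subseteq V(G)$ with $|B'|\le b$ such that the $2$-core of $G-B'$ has at most $x$ vertices and every vertex of $B'$ has degree larger than $2$ in $G$.
   Context: For an integer $k$, the $k$-core of a graph $G$ is the (uniquely determined) largest induced subgraph of $G$ in which every vertex has degree at least $k$ (possibly empty); its size is its number of vertices. Collapsed $k$-Core: given an undirected graph $G=(V,E)$ and integers $b$, $x$, $k$, decide whether there is a set $S\subseteq V$ with $|S|\le b$ such that the $k$-core of $G-S$ has at most $x$ vertices. *)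

(* A finite simple graph is a symmetric irreflexive relation
   e on a finite vertex type T. *)
From mathcomp Require Import all_boot.
Set Implicit Arguments. Unset Strict Implicit. Unset Printing Implicit Defensive.

Definition nbhd (T : finType) (e : rel T) (v : T) : {set T} := [set u | e v u].

Definition deg (T : finType) (e : rel T) (v : T) : nat := #|nbhd e v|.

Definition deg_in (T : finType) (e : rel T) (C : {set T}) (v : T) : nat :=
  #|nbhd e v :&: C|.

Definition min_deg_ge (T : finType) (e : rel T) (k : nat) (C : {set T}) : bool :=
  [forall v in C, k <= deg_in e C v].

(* The k-core of the subgraph of G induced by A: the union of all vertex sets
   C included in A inducing a subgraph of minimum degree >= k; this union is
   itself such a set, hence the (unique) largest one. *)
Definition kcore (T : finType) (e : rel T) (k : nat) (A : {set T}) : {set T} :=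
  \bigcup_(C : {set T} | (C \subset A) && min_deg_ge e k C) C.

Definition component (T : finType) (e : rel T) (v : T) : {set T} :=
  [set u | connect e v u].

Definition induces_cycle (T : finType) (e : rel T) (C : {set T}) : Prop :=
  exists s : seq T,
    [/\ uniq s, 3 <= size s, (forall v, (v \in C) = (v \in s)) &
        forall u v, u \in C -> v \in C ->
          e u v = (v == next s u) || (u == next s v)].

From mathcomp Require Import all_boot.
Set Implicit Arguments. Unset Strict Implicit. Unset Printing Implicit Defensive.

(* Inside any set C of minimum degree >= 2, a vertex of degree 2 in G has both
   of its neighbours in C.  Hence from a vertex v, following edges out of
   degree-2 vertices never leaves any such C containing v.  If this walk never
   met a vertex of degree > 2, the whole component of v would be 2-regular,
   i.e. a cycle, which is excluded.  So every v has a vertex f v of degree > 2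
   lying in every such C containing v, and B' := f @: B works: it is no larger
   than B, and a 2-core avoiding B' avoids B. *)

Lemma kcore_subset (T : finType) (e : rel T) k (A1 A2 : {set T}) :
  (forall C : {set T}, C \subset A1 -> min_deg_ge e k C -> C \subset A2) ->
  kcore e k A1 \subset kcore e k A2.
Proof.
move=> sub12; apply/bigcupsP => C /andP[CA1 mdC].
by apply: (bigcup_sup C); rewrite sub12.
Qed.

Section TwoCore.
Variables (T : finType) (e : rel T).
Hypotheses (e_sym : symmetric e) (e_irr : irreflexive e).

Lemma cycle_of_chord (y y' : T) c : uniq (y :: c) -> path e y c -> y' \in c ->
  e (last y c) y -> e (last y c) y' -> 2 < size (y :: c) /\ cycle e (y :: c).
Proof.
move=> uyc pyc y'c ely ely'; split; last by rewrite /cycle rcons_path pyc ely.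
have y'_neq_y : y' != y by apply: contraTneq y'c => ->; case/andP: uyc.
have last_neq x : e (last y c) x -> last y c != x.
  by move=> elx; apply: contraTneq elx => ->; rewrite e_irr.
have -> : 3 = size [:: y; y'; last y c] by [].
apply: uniq_leq_size.
  by rewrite /= !inE negb_or eq_sym y'_neq_y !(eq_sym _ (last y c)) !last_neq.
move=> z; rewrite !inE => /or3P[] /eqP ->; rewrite ?inE ?eqxx ?y'c ?orbT //.
exact: mem_last.
Qed.

(* The cycle runs from the earlier of two neighbours of the last vertex to the
   end of the path. *)
Lemma cycle_in_closed_path (q : seq T) x0 : uniq q -> sorted e q ->
    1 < deg e (last x0 q) -> {subset nbhd e (last x0 q) <= q} ->
  exists s, [/\ uniq s, 2 < size s, cycle e s & {subset s <= q}].
Proof.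
move=> uq sq /card_gt1P[y1 [y2 [ny1 ny2 y12]]] closed_q.
have chord a y c y' : q = a ++ y :: c -> y' \in c ->
    e (last y c) y -> e (last y c) y' ->
    exists s, [/\ uniq s, 2 < size s, cycle e s & {subset s <= q}].
  move=> Dq y'c ely ely'; exists (y :: c).
  have uyc : uniq (y :: c) by move: uq; rewrite Dq cat_uniq => /and3P[].
  have pyc : path e y c by move: sq; rewrite Dq sorted_cat_cons => /andP[].
  have [size_yc cyc] := cycle_of_chord uyc pyc y'c ely ely'.
  by split=> // z zc; rewrite Dq mem_cat zc orbT.
have y1q := closed_q _ ny1; have y2q := closed_q _ ny2.
move: y1q y2q uq sq ny1 ny2 chord; case/splitPr=> a c.
rewrite /nbhd !inE last_cat /= mem_cat inE (eq_sym y2) (negPf y12) /=.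
move=> /orP[y2a|y2c] uq sq ny1 ny2 chord.
  move: uq sq chord; case/splitPr: y2a => a1 a2 uq sq chord.
  apply: (chord a1 y2 (a2 ++ y1 :: c) y1); first by rewrite -catA.
  - by rewrite mem_cat inE eqxx orbT.
  - by rewrite last_cat.
  - by rewrite last_cat.
exact: (chord a y1 c y2).
Qed.

Lemma exists_closed_path v : exists p,
  [/\ uniq (v :: p), path e v p & {subset nbhd e (last v p) <= v :: p}].
Proof.
suff extend p : uniq (v :: p) -> path e v p -> exists q,
    [/\ uniq (v :: q), path e v q & {subset nbhd e (last v q) <= v :: q}].
  exact: (extend [::]).
have [n] := ubnP (#|T| - size p); elim: n p => // n IHn p lt_p_n uvp pvp.
have [/existsP[z /andP[nz zNp]] | closed_p] :=
  boolP [exists z in nbhd e (last v p), z \notin v :: p]; last first.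
  exists p; split=> // z nz; apply: contraNT closed_p => zNp.
  by apply/existsP; exists z; rewrite nz.
have uvpz : uniq (rcons (v :: p) z) by rewrite rcons_uniq zNp.
apply: (IHn (rcons p z)); last 2 first.
- by rewrite -rcons_cons.
- by rewrite rcons_path pvp; rewrite /nbhd inE in nz.
have := max_card (mem (rcons (v :: p) z)).
rewrite (card_uniqP uvpz) size_rcons /= size_rcons subnS => size_p_lt.
by rewrite prednK // subn_gt0 ltnW.
Qed.

Lemma cycle_in_component v : (forall u, u \in component e v -> 1 < deg e u) ->
  exists s, [/\ uniq s, 2 < size s, cycle e s & {subset s <= component e v}].
Proof.
move=> deg_gt1; have [p [uvp pvp closed_p]] := exists_closed_path v.
have vp_comp : {subset v :: p <= component e v}.
  by move=> u /(path_connect pvp); rewrite inE.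
have [|s [us size_s cs sp]] :=
  @cycle_in_closed_path (v :: p) v uvp pvp _ closed_p.
  by apply: deg_gt1; apply: vp_comp; exact: (mem_last v p).
by exists s; split=> // u /sp /vp_comp.
Qed.

Lemma next_neq_prev (s : seq T) x : uniq s -> 2 < size s -> x \in s ->
  next s x != prev s x.
Proof.
move=> us size_s xs; apply/eqP => next_prev_x.
have nnx : next s (next s x) = x by rewrite next_prev_x next_prev.
case: (rot_to xs) => i s' Ds.
have us' : uniq (x :: s') by rewrite -Ds rot_uniq.
have size_s' : 2 < size (x :: s') by rewrite -Ds size_rot.
have {nnx} : next (x :: s') (next (x :: s') x) = x.
  by rewrite -Ds !(next_rot i us).
move: us' size_s'; case: s' {Ds} => [|y [|z r]] //= /andP[].
rewrite !inE !negb_or => /and3P[xy xz _] /andP[yz _] _.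
rewrite eqxx /= (eq_sym y) (negPf xy) eqxx /= => zx.
by move: xz; rewrite zx eqxx.
Qed.

Lemma nbhd_on_cycle (s : seq T) x : uniq s -> 2 < size s -> cycle e s ->
  x \in s -> deg e x = 2 -> nbhd e x = [set next s x; prev s x].
Proof.
move=> us size_s cs xs deg_x; apply/eqP; rewrite eq_sym eqEcard.
rewrite [#|nbhd e x|]deg_x cards2 next_neq_prev // andbT.
apply/subsetP => y; rewrite !inE /nbhd => /orP[] /eqP ->.
  exact: next_cycle.
by rewrite e_sym; apply: prev_cycle.
Qed.

Lemma deg2_component_induces_cycle v :
  (forall u, u \in component e v -> deg e u = 2) ->
  induces_cycle e (component e v).
Proof.
move=> deg2.
have [s [us size_s cs s_comp]] : exists s,
    [/\ uniq s, 2 < size s, cycle e s & {subset s <= component e v}].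
  by apply: cycle_in_component => u /deg2 ->.
have nbhd_s y : y \in s -> nbhd e y = [set next s y; prev s y].
  by move=> ys; apply: nbhd_on_cycle => //; apply/deg2/s_comp.
have closed_s : closed e s.
  apply: intro_closed => [|y z yz ys]; first exact: sym_connect_sym.
  have : z \in nbhd e y by rewrite /nbhd inE.
  by rewrite nbhd_s // !inE => /orP[] /eqP ->; rewrite ?mem_next ?mem_prev.
have comp_s u : (u \in component e v) = (u \in s).
  apply/idP/idP => [|/s_comp //]; rewrite inE => vu.
  have ys : nth v s 0 \in s by rewrite mem_nth // ltnW // ltnW.
  have := s_comp _ ys; rewrite inE => vy.
  rewrite -(closed_connect closed_s (x := nth v s 0)) //.
  by apply: connect_trans vu; rewrite (sym_connect_sym e_sym).
exists s; split=> // y z; rewrite !comp_s => ys zs.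
apply/idP/idP => [yz | /orP[] /eqP ->].
- have : z \in nbhd e y by rewrite /nbhd inE.
  rewrite nbhd_s // !inE => /orP[-> // | /eqP ->].
  by rewrite next_prev // eqxx orbT.
- exact: next_cycle.
- by rewrite e_sym; apply: next_cycle.
Qed.

Lemma min_deg2_nbhd_subset (C : {set T}) x : min_deg_ge e 2 C -> x \in C ->
  deg e x = 2 -> nbhd e x \subset C.
Proof.
move=> /forallP/(_ x) mdC xC deg_x; rewrite xC /deg_in in mdC.
apply/setIidPl/eqP; rewrite eqEcard subsetIl.
by rewrite [#|nbhd e x|]deg_x.
Qed.

Definition deg2_edge := [rel x y | e x y && (deg e x == 2)].

Lemma min_deg2_connect_closed (C : {set T}) v u : min_deg_ge e 2 C ->
  v \in C -> connect deg2_edge v u -> u \in C.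
Proof.
move=> mdC vC /connectP[p pvp ->] {u}.
elim: p v vC pvp => [|y p IHp] x xC //= /andP[/andP[xy /eqP deg_x] pyp].
apply: IHp pyp; apply: (subsetP (min_deg2_nbhd_subset mdC xC deg_x)).
by rewrite /nbhd inE.
Qed.

Hypothesis own_2core : forall v, 2 <= deg e v.
Hypothesis no_cycle_comp : forall v, ~ induces_cycle e (component e v).

Lemma forced_branch_vertex v : exists w, 2 < deg e w /\
  forall C : {set T}, min_deg_ge e 2 C -> v \in C -> w \in C.
Proof.
have [/existsP[w /andP[vw deg_w]] | no_branch] :=
  boolP [exists w, connect deg2_edge v w && (2 < deg e w)].
  by exists w; split=> // C mdC vC; apply: min_deg2_connect_closed vw.
have deg2 u : connect deg2_edge v u -> deg e u = 2.
  move=> vu; apply/eqP; rewrite eqn_leq own_2core andbT leqNgt.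
  by apply: contra no_branch => deg_u; apply/existsP; exists u; rewrite vu.
have closed_reach : closed e (connect deg2_edge v).
  apply: intro_closed => [|x y xy vx]; first exact: sym_connect_sym.
  have deg2_x := deg2 _ vx.
  by apply: connect_trans vx (connect1 _); rewrite /= xy deg2_x.
exfalso; apply: (no_cycle_comp (v := v)); apply: deg2_component_induces_cycle.
move=> u; rewrite inE => vu; apply: deg2.
suff: u \in connect deg2_edge v by [].
by rewrite -(closed_connect closed_reach vu); apply: connect0.
Qed.

End TwoCore.

Theorem mainTheorem7 (T : finType) (e : rel T)
    (e_sym : symmetric e) (e_irr : irreflexive e) (b x : nat)
    (own_2core : forall v : T, 2 <= deg e v)
    (no_cycle_comp : forall v : T, ~ induces_cycle e (component e v))
    (hB : exists B : {set T}, #|B| <= b /\ #|kcore e 2 (~: B)| <= x) :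
  exists B' : {set T},
    [/\ #|B'| <= b, #|kcore e 2 (~: B')| <= x &
        forall v, v \in B' -> 2 < deg e v].
Proof.
have [B [card_B core_B]] := hB.
have [f f_forced] := fin_all_exists
  (forced_branch_vertex e_sym e_irr own_2core no_cycle_comp).
exists (f @: B); split.
- exact: leq_trans (leq_imset_card f B) card_B.
- apply: leq_trans core_B; apply/subset_leq_card/kcore_subset => C CfB mdC.
  apply/subsetP => u uC; rewrite inE; apply/negP => uB.
  have := subsetP CfB _ ((f_forced u).2 C mdC uC).
  by rewrite inE imset_f.
- by move=> _ /imsetP[u _ ->]; apply: (f_forced u).1.
Qed.
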